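(* Equip $\mathbb{R}^k$ with the Euclidean norm and $\mathbb{R}$ with the absolute value. Then the maps $(0,\infty)^k\to\mathbb{R}$, $\lambda\mapsto g(\|Y-X\hat\beta^\lambda\|_2^2)$ and $\lambda\mapsto\|Y-X\hat\beta^\lambda\|_2^2$ are well defined (independent of the choice of minimizer $\hat\beta^\lambda$) and continuous.
   Context: $Y\in\mathbb{R}^n$, $X\in\mathbb{R}^{n\times p}$. Link function $g:\mathbb{R}\to[0,\infty)$ with $g(0)=0$, $g$ continuous and strictly increasing on $[0,\infty)$, continuously differentiable on $(0,\infty)$ with strictly positive and non-increasing derivative, and such that $\alpha\mapsto g(\|\alpha\|_2^2)$ is strictly convex on $\mathbb{R}^n$. $M_1,\dots,M_k\in\mathbb{R}^{p\times p}$ with $\bigcap_{j}\mathrm{Ker}(M_j)=\{0\}$, $q_j\ge1$, $\|\cdot\|_{q_j}$ the $\ell_{q_j}$-norm on $\mathbb{R}^p$. For $\lambda\in(0,\infty)^k$, $\hat\beta^\lambda$ denotes any element of $\arg\min_{\beta\in\mathbb{R}^p}\{g(\|Y-X\beta\|_2^2)+\sum_{j=1}^k\lambda_j\|M_j\beta\|_{q_j}\}$. *)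

(* classical real numbers. Vectors of R^m are functions nat -> R,
   only the indices < m are meaningful; matrices are nat -> nat -> R. *)
From Stdlib Require Import Reals.
Open Scope R_scope.

Fixpoint rsum (f : nat -> R) (m : nat) : R :=
  match m with
  | O => 0
  | S m' => rsum f m' + f m'
  end.

Definition sqnorm (m : nat) (v : nat -> R) : R := rsum (fun i => v i ^ 2) m.

Definition edist (m : nat) (u v : nat -> R) : R := sqrt (sqnorm m (fun i => u i - v i)).

Definition matvec (c : nat) (A : nat -> nat -> R) (v : nat -> R) : nat -> R :=
  fun i => rsum (fun j => A i j * v j) c.

(* x^q for x >= 0 and q > 0, with the convention 0^q = 0 *)
Definition rpow (x q : R) : R :=
  if Rle_dec x 0 then 0 else Rpower x q.

Definition lqnorm (m : nat) (q : R) (v : nat -> R) : R :=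
  rpow (rsum (fun i => rpow (Rabs (v i)) q) m) (/ q).

Definition objective (n p k : nat) (g : R -> R) (Y : nat -> R)
  (X : nat -> nat -> R) (M : nat -> nat -> nat -> R) (q : nat -> R)
  (lam : nat -> R) (b : nat -> R) : R :=
  g (sqnorm n (fun i => Y i - matvec p X b i))
  + rsum (fun j => lam j * lqnorm p (q j) (matvec p (M j) b)) k.

Definition is_minimizer (n p k : nat) (g : R -> R) (Y : nat -> R)
  (X : nat -> nat -> R) (M : nat -> nat -> nat -> R) (q : nat -> R)
  (lam : nat -> R) (b : nat -> R) : Prop :=
  forall b' : nat -> R, objective n p k g Y X M q lam b <= objective n p k g Y X M q lam b'.

Definition pos_vec (k : nat) (lam : nat -> R) : Prop := forall j, (j < k)%nat -> 0 < lam j.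

Definition link_function (n : nat) (g : R -> R) : Prop :=
  g 0 = 0
  /\ (forall x, 0 <= x -> forall eps, 0 < eps -> exists delta, 0 < delta /\
        forall y, 0 <= y -> Rabs (y - x) < delta -> Rabs (g y - g x) < eps)
  /\ (forall x y, 0 <= x -> x < y -> g x < g y)
  /\ (exists g' : R -> R,
        (forall x, 0 < x -> derivable_pt_lim g x (g' x))
        /\ (forall x, 0 < x -> continuity_pt g' x)
        /\ (forall x, 0 < x -> 0 < g' x)
        /\ (forall x y, 0 < x -> x <= y -> g' y <= g' x))
  /\ (forall (a b : nat -> R) (t : R),
        (exists i, (i < n)%nat /\ a i <> b i) -> 0 < t < 1 ->
        g (sqnorm n (fun i => t * a i + (1 - t) * b i))
        < t * g (sqnorm n a) + (1 - t) * g (sqnorm n b)).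

From Stdlib Require Import Reals Lra Lia Classical FunctionalExtensionality.
From HB Require structures.
From mathcomp Require all_boot all_order all_algebra all_classical all_reals all_analysis.
From mathcomp Require Rstruct Rstruct_topology.
Open Scope R_scope.

(* The penalty is positively homogeneous and, by the kernel condition, vanishes only at 0, so
   it dominates a multiple of the sup-norm; the objective is thus coercive and continuous and
   attains its minimum on a large box.
   For minimizers b at lam and b0 at lam0, comparing each with the midpoint (b + b0)/2 and using
   the midpoint convexity of the l_q norms bounds the midpoint gap of phi(t) = g(t^2) between
   ||Y - X b|| and ||Y - X b0|| by sum_j (lam0_j - lam_j)(||M_j b|| - ||M_j b0||)/4. This is 0
   when lam = lam0 and O(|lam - lam0|) nearby, minimizers having bounded penalties; strict
   convexity of phi turns a small gap into close residual norms. *)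

Lemma rsum_ext (f g : nat -> R) m :
  (forall i, (i < m)%nat -> f i = g i) -> rsum f m = rsum g m.
Proof.
  induction m as [|m IH]; intros H; simpl; [reflexivity|].
  rewrite IH by (intros; apply H; lia). rewrite (H m) by lia. reflexivity.
Qed.

Lemma rsum_plus (f g : nat -> R) m :
  rsum (fun i => f i + g i) m = rsum f m + rsum g m.
Proof. induction m as [|m IH]; simpl; [lra|]. rewrite IH. ring. Qed.

Lemma rsum_scal (c : R) (f : nat -> R) m :
  rsum (fun i => c * f i) m = c * rsum f m.
Proof. induction m as [|m IH]; simpl; [ring|]. rewrite IH. ring. Qed.

Lemma rsum_const (c : R) m : rsum (fun _ => c) m = INR m * c.
Proof. induction m as [|m IH]; [simpl; ring|]. cbn [rsum]. rewrite IH, S_INR. ring. Qed.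

Lemma rsum_le (f g : nat -> R) m :
  (forall i, (i < m)%nat -> f i <= g i) -> rsum f m <= rsum g m.
Proof.
  induction m as [|m IH]; intros H; simpl; [lra|].
  assert (H1 := IH (fun i Hi => H i ltac:(lia))). assert (H2 := H m ltac:(lia)). lra.
Qed.

Lemma rsum_nonneg (f : nat -> R) m :
  (forall i, (i < m)%nat -> 0 <= f i) -> 0 <= rsum f m.
Proof.
  intros H. replace 0 with (rsum (fun _ => 0) m) by (rewrite rsum_const; ring).
  apply rsum_le; exact H.
Qed.

Lemma rsum_ge_term (f : nat -> R) m j :
  (forall i, (i < m)%nat -> 0 <= f i) -> (j < m)%nat -> f j <= rsum f m.
Proof.
  induction m as [|m IH]; intros H Hj; [lia|]. simpl.
  destruct (Nat.eq_dec j m) as [->|Hne].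
  - assert (0 <= rsum f m) by (apply rsum_nonneg; intros; apply H; lia). lra.
  - assert (f j <= rsum f m) by (apply IH; [intros; apply H; lia| lia]).
    assert (0 <= f m) by (apply H; lia). lra.
Qed.

Lemma rsum_mult_sub (l0 l u v : nat -> R) k :
  rsum (fun j => (l0 j - l j) * (u j - v j)) k =
  rsum (fun j => l0 j * u j) k - rsum (fun j => l0 j * v j) k -
  (rsum (fun j => l j * u j) k - rsum (fun j => l j * v j) k).
Proof. induction k as [|k IH]; simpl; [ring|]. rewrite IH. ring. Qed.

Lemma sqnorm_nonneg m v : 0 <= sqnorm m v.
Proof. apply rsum_nonneg; intros; apply pow2_ge_0. Qed.

Lemma edist_ge_coord k l l0 j : (j < k)%nat -> Rabs (l j - l0 j) <= edist k l l0.
Proof.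
  intros Hj. unfold edist. rewrite <- sqrt_pow2 with (x := Rabs (l j - l0 j)) by apply Rabs_pos.
  apply sqrt_le_1_alt. rewrite pow2_abs.
  apply (rsum_ge_term (fun i => (l i - l0 i) ^ 2)); [intros; apply pow2_ge_0| exact Hj].
Qed.

Lemma pos_vec_lower_bound k (f : nat -> R) : pos_vec k f ->
  exists L, 0 < L /\ forall j, (j < k)%nat -> L <= f j.
Proof.
  induction k as [|k IH]; intros H.
  - exists 1; split; [lra| intros; lia].
  - destruct IH as [L [HL HLj]]; [intros j Hj; apply H; lia|].
    exists (Rmin L (f k)). split; [apply Rmin_glb_lt; [lra| apply H; lia]|].
    intros j Hj. destruct (Nat.eq_dec j k) as [->|Hne]; [apply Rmin_r|].
    eapply Rle_trans; [apply Rmin_l| apply HLj; lia].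
Qed.

Lemma rpow_nonpos x q : x <= 0 -> rpow x q = 0.
Proof. intros H. unfold rpow. destruct (Rle_dec x 0); [reflexivity| lra]. Qed.

Lemma rpow_Rpower x q : 0 < x -> rpow x q = Rpower x q.
Proof. intros H. unfold rpow. destruct (Rle_dec x 0); [lra| reflexivity]. Qed.

Lemma rpow_gt0 x q : 0 < x -> 0 < rpow x q.
Proof. intros H. rewrite rpow_Rpower by exact H. apply exp_pos. Qed.

Lemma rpow_ge0 x q : 0 <= rpow x q.
Proof.
  destruct (Rle_dec x 0) as [H|H].
  - rewrite rpow_nonpos by exact H. lra.
  - left; apply rpow_gt0; lra.
Qed.

Lemma rpow_eq0 x q : rpow x q = 0 -> x <= 0.
Proof.
  intros H. destruct (Rle_dec x 0) as [h|h]; [exact h|].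
  assert (0 < rpow x q) by (apply rpow_gt0; lra). lra.
Qed.

Lemma rpow_mult_distr x y q : 0 <= x -> 0 <= y -> rpow (x * y) q = rpow x q * rpow y q.
Proof.
  intros Hx Hy. destruct (Req_dec x 0) as [->|Hx0].
  { rewrite Rmult_0_l, (rpow_nonpos 0) by lra. ring. }
  destruct (Req_dec y 0) as [->|Hy0].
  { rewrite Rmult_0_r, (rpow_nonpos 0) by lra. ring. }
  rewrite !rpow_Rpower by (try apply Rmult_lt_0_compat; lra).
  symmetry; apply Rpower_mult_distr; lra.
Qed.

Lemma rpow_rpow x a b : 0 <= x -> rpow (rpow x a) b = rpow x (a * b).
Proof.
  intros Hx. destruct (Req_dec x 0) as [->|Hx0].
  { rewrite !(rpow_nonpos 0) by lra. reflexivity. }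
  rewrite (rpow_Rpower (rpow x a)) by (apply rpow_gt0; lra).
  rewrite !(rpow_Rpower x) by lra. apply Rpower_mult.
Qed.

Lemma rpow_1 x : 0 <= x -> rpow x 1 = x.
Proof.
  intros Hx. destruct (Req_dec x 0) as [->|Hx0]; [apply rpow_nonpos; lra|].
  rewrite rpow_Rpower by lra. apply Rpower_1; lra.
Qed.

Lemma rpow_1_l q : rpow 1 q = 1.
Proof. rewrite rpow_Rpower by lra. unfold Rpower. rewrite ln_1, Rmult_0_r. apply exp_0. Qed.

Lemma rpow_inv_l x q : 0 <= x -> 0 < q -> rpow (rpow x q) (/ q) = x.
Proof. intros Hx Hq. rewrite rpow_rpow, Rinv_r by lra. apply rpow_1; exact Hx. Qed.

Lemma rpow_inv_r x q : 0 <= x -> 0 < q -> rpow (rpow x (/ q)) q = x.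
Proof. intros Hx Hq. rewrite rpow_rpow, Rinv_l by lra. apply rpow_1; exact Hx. Qed.

Lemma rpow_Rinv x q : 0 < x -> rpow (/ x) q = / rpow x q.
Proof.
  intros Hx. assert (Hr := rpow_gt0 x q Hx).
  assert (E : rpow x q * rpow (/ x) q = 1).
  { rewrite <- rpow_mult_distr by (try (left; apply Rinv_0_lt_compat); lra).
    rewrite Rinv_r by lra. apply rpow_1_l. }
  field_simplify_eq; [| lra]. rewrite Rmult_comm; exact E.
Qed.

Lemma rpow_le_compat x y q : 0 < q -> 0 <= x <= y -> rpow x q <= rpow y q.
Proof.
  intros Hq [Hx Hxy]. destruct (Req_dec x 0) as [->|Hx0].
  { rewrite (rpow_nonpos 0) by lra. apply rpow_ge0. }
  rewrite !rpow_Rpower by lra. apply Rle_Rpower_l; lra.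
Qed.

Lemma rpow_lt_compat x y q : 0 < q -> 0 <= x < y -> rpow x q < rpow y q.
Proof.
  intros Hq [Hx Hxy]. destruct (Req_dec x 0) as [->|Hx0].
  { rewrite (rpow_nonpos 0) by lra. apply rpow_gt0; lra. }
  rewrite !rpow_Rpower by lra. apply Rlt_Rpower_l; lra.
Qed.

Lemma exp_convex s x y : 0 <= s <= 1 ->
  exp (s * x + (1 - s) * y) <= s * exp x + (1 - s) * exp y.
Proof.
  intros Hs. set (m := s * x + (1 - s) * y). assert (HE : 0 < exp m) by apply exp_pos.
  assert (tangent : forall z, exp m * (1 + (z - m)) <= exp z).
  { intros z. replace (exp z) with (exp m * exp (z - m)) by (rewrite <- exp_plus; f_equal; ring).
    apply Rmult_le_compat_l; [lra| apply exp_ineq1_le]. }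
  assert (h1 := tangent x). assert (h2 := tangent y).
  assert (h3 : s * (exp m * (1 + (x - m))) <= s * exp x) by (apply Rmult_le_compat_l; lra).
  assert (h4 : (1 - s) * (exp m * (1 + (y - m))) <= (1 - s) * exp y)
    by (apply Rmult_le_compat_l; lra).
  assert (h5 : s * (exp m * (1 + (x - m))) + (1 - s) * (exp m * (1 + (y - m))) = exp m)
    by (unfold m; ring).
  lra.
Qed.

Lemma Rpower_bernoulli q r : 1 <= q -> 0 < r -> 1 + q * (r - 1) <= Rpower r q.
Proof.
  intros Hq Hr. assert (Hs : 0 <= / q <= 1).
  { split; [left; apply Rinv_0_lt_compat; lra|].
    rewrite <- Rinv_1. apply Rinv_le_contravar; lra. }
  assert (H := exp_convex (/ q) (q * ln r) 0 Hs).
  replace (/ q * (q * ln r) + (1 - / q) * 0) with (ln r) in H by (field; lra).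
  rewrite exp_ln, exp_0 in H by exact Hr.
  apply Rmult_le_compat_l with (r := q) in H; [|lra].
  replace (q * (/ q * exp (q * ln r) + (1 - / q) * 1)) with (exp (q * ln r) + q - 1)
    in H by (field; lra).
  unfold Rpower. replace (ln r * q) with (q * ln r) by ring. nra.
Qed.

Lemma rpow_tangent q z w : 1 <= q -> 0 < z -> 0 <= w ->
  rpow z q + q * (rpow z q / z) * (w - z) <= rpow w q.
Proof.
  intros Hq Hz Hw. assert (HZ := rpow_gt0 z q Hz).
  destruct (Req_dec w 0) as [->|Hw0].
  { rewrite (rpow_nonpos 0) by lra.
    replace (rpow z q + q * (rpow z q / z) * (0 - z)) with ((1 - q) * rpow z q) by (field; lra).
    nra. }
  assert (Hb := Rpower_bernoulli q (w / z) Hq ltac:(apply Rdiv_lt_0_compat; lra)).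
  replace (rpow w q) with (rpow z q * rpow (w / z) q).
  2:{ rewrite <- rpow_mult_distr by (try apply Rlt_le, Rdiv_lt_0_compat; lra).
      f_equal. field. lra. }
  rewrite (rpow_Rpower (w / z)) by (apply Rdiv_lt_0_compat; lra).
  apply Rmult_le_compat_l with (r := rpow z q) in Hb; [|lra].
  replace (rpow z q * (1 + q * (w / z - 1))) with (rpow z q + q * (rpow z q / z) * (w - z))
    in Hb by (field; lra).
  exact Hb.
Qed.

Lemma rpow_convex q x y t : 1 <= q -> 0 <= x -> 0 <= y -> 0 <= t <= 1 ->
  rpow (t * x + (1 - t) * y) q <= t * rpow x q + (1 - t) * rpow y q.
Proof.
  intros Hq Hx Hy Ht. set (z := t * x + (1 - t) * y).
  assert (Hrx := rpow_ge0 x q). assert (Hry := rpow_ge0 y q).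
  destruct (Rle_dec z 0) as [Hz|Hz].
  { rewrite rpow_nonpos by exact Hz. nra. }
  assert (h1 := rpow_tangent q z x Hq ltac:(lra) Hx).
  assert (h2 := rpow_tangent q z y Hq ltac:(lra) Hy).
  set (K := q * (rpow z q / z)) in *.
  assert (h3 : t * (rpow z q + K * (x - z)) <= t * rpow x q) by (apply Rmult_le_compat_l; lra).
  assert (h4 : (1 - t) * (rpow z q + K * (y - z)) <= (1 - t) * rpow y q)
    by (apply Rmult_le_compat_l; lra).
  assert (h5 : t * (rpow z q + K * (x - z)) + (1 - t) * (rpow z q + K * (y - z)) = rpow z q)
    by (unfold z; ring).
  lra.
Qed.

Lemma continuity_pt_rpow q x : 0 < q -> continuity_pt (fun y => rpow y q) x.
Proof.
  intros Hq. destruct (Rtotal_order x 0) as [Hx|[Hx|Hx]].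
  - apply (continuity_pt_locally_ext (fun _ => 0) _ (- x)); [lra| |].
    2:{ apply continuity_pt_const. intros ? ?. reflexivity. }
    intros y Hy. apply Rabs_def2 in Hy. rewrite rpow_nonpos by lra. reflexivity.
  - subst x. intros e He. exists (rpow e (/ q)). split; [apply rpow_gt0; exact He|].
    intros y [_ Hy]. simpl in *. unfold R_dist in *.
    rewrite (rpow_nonpos 0), Rminus_0_r in * by lra.
    destruct (Rle_dec y 0) as [Hy0|Hy0].
    + rewrite rpow_nonpos, Rabs_R0 by exact Hy0. exact He.
    + rewrite Rabs_right in Hy by lra. rewrite Rabs_right by (apply Rle_ge, rpow_ge0).
      rewrite <- (rpow_inv_r e q) by lra. apply rpow_lt_compat; lra.
  - apply (continuity_pt_locally_ext (fun y => Rpower y q) _ x); [lra| |].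
    + intros y Hy. apply Rabs_def2 in Hy. symmetry; apply rpow_Rpower; lra.
    + apply derivable_continuous_pt. exact (exist _ _ (derivable_pt_lim_power x q Hx)).
Qed.

Definition cont (p : nat) (F : (nat -> R) -> R) (b : nat -> R) : Prop :=
  forall eps, 0 < eps -> exists d, 0 < d /\ forall b',
    (forall i, (i < p)%nat -> Rabs (b' i - b i) < d) -> Rabs (F b' - F b) < eps.

Lemma Rmax_abs_formula x y : Rmax x y = (x + y + Rabs (x - y)) / 2.
Proof.
  unfold Rmax. destruct (Rle_dec x y).
  - rewrite Rabs_left1 by lra. field.
  - rewrite Rabs_right by lra. field.
Qed.

Section Continuity.
Variable p : nat.
Variable b : nat -> R.

Lemma cont_const c : cont p (fun _ => c) b.
Proof. intros e He. exists 1; split; [lra|]. intros. rewrite Rminus_diag, Rabs_R0; exact He. Qed.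

Lemma cont_coord i : (i < p)%nat -> cont p (fun b => b i) b.
Proof. intros Hi e He. exists e; split; [exact He|]. intros b' H; apply H; exact Hi. Qed.

Lemma cont_ext F G : (forall b, F b = G b) -> cont p F b -> cont p G b.
Proof.
  intros E H e He. destruct (H e He) as [d [Hd Hb]]. exists d; split; [exact Hd|].
  intros b' Hb'. rewrite <- !E. apply Hb; exact Hb'.
Qed.

Lemma cont_plus F G : cont p F b -> cont p G b -> cont p (fun b => F b + G b) b.
Proof.
  intros HF HG e He.
  destruct (HF (e / 2) ltac:(lra)) as [d1 [Hd1 H1]].
  destruct (HG (e / 2) ltac:(lra)) as [d2 [Hd2 H2]].
  exists (Rmin d1 d2); split; [apply Rmin_glb_lt; lra|]. intros b' Hb'.
  assert (A1 := H1 b' (fun i Hi => Rlt_le_trans _ _ _ (Hb' i Hi) (Rmin_l _ _))).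
  assert (A2 := H2 b' (fun i Hi => Rlt_le_trans _ _ _ (Hb' i Hi) (Rmin_r _ _))).
  replace (F b' + G b' - (F b + G b)) with ((F b' - F b) + (G b' - G b)) by ring.
  eapply Rle_lt_trans; [apply Rabs_triang|]. lra.
Qed.

Lemma cont_comp (phi : R -> R) (D : R -> Prop) F :
  (forall b', D (F b')) -> cont p F b ->
  (forall e, 0 < e -> exists a, 0 < a /\
     forall y, D y -> Rabs (y - F b) < a -> Rabs (phi y - phi (F b)) < e) ->
  cont p (fun b => phi (F b)) b.
Proof.
  intros HD HF Hphi e He. destruct (Hphi e He) as [a [Ha Hp]].
  destruct (HF a Ha) as [d [Hd Hb]]. exists d; split; [exact Hd|].
  intros b' Hb'. apply Hp; [apply HD| apply Hb; exact Hb'].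
Qed.

Lemma cont_comp_pt (phi : R -> R) F : continuity_pt phi (F b) -> cont p F b ->
  cont p (fun b => phi (F b)) b.
Proof.
  intros Hc HF. apply (cont_comp phi (fun _ => True)); [intros; exact I| exact HF|].
  intros e He. destruct (Hc e He) as [a [Ha Hp]]. exists a; split; [exact Ha|].
  intros y _ Hy. destruct (Req_dec y (F b)) as [->|Hne].
  - rewrite Rminus_diag, Rabs_R0; exact He.
  - apply (Hp y). split; [split; [exact I| congruence]| exact Hy].
Qed.

Lemma cont_scal c F : cont p F b -> cont p (fun b => c * F b) b.
Proof. apply (cont_comp_pt (fun y => c * y)). reg. Qed.

Lemma cont_minus F G : cont p F b -> cont p G b -> cont p (fun b => F b - G b) b.
Proof.
  intros HF HG. apply (cont_ext (fun b => F b + (-1) * G b)); [intros; ring|].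
  apply cont_plus; [exact HF| apply cont_scal; exact HG].
Qed.

Lemma cont_sq F : cont p F b -> cont p (fun b => F b ^ 2) b.
Proof. apply (cont_comp_pt (fun y => y ^ 2)). reg. Qed.

Lemma cont_abs F : cont p F b -> cont p (fun b => Rabs (F b)) b.
Proof. apply (cont_comp_pt Rabs). apply Rcontinuity_abs. Qed.

Lemma cont_rpow q F : 0 < q -> cont p F b -> cont p (fun b => rpow (F b) q) b.
Proof. intros Hq. apply (cont_comp_pt (fun y => rpow y q)). apply continuity_pt_rpow, Hq. Qed.

Lemma cont_max F G : cont p F b -> cont p G b -> cont p (fun b => Rmax (F b) (G b)) b.
Proof.
  intros HF HG. apply (cont_ext (fun b => / 2 * (F b + G b + Rabs (F b - G b)))).
  { intros; rewrite Rmax_abs_formula; field. }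
  apply cont_scal, cont_plus; [apply cont_plus; assumption|].
  apply cont_abs, cont_minus; assumption.
Qed.

Lemma cont_rsum (F : nat -> (nat -> R) -> R) m :
  (forall j, (j < m)%nat -> cont p (F j) b) -> cont p (fun b => rsum (fun j => F j b) m) b.
Proof.
  induction m as [|m IH]; intros H; simpl; [apply cont_const|].
  apply (cont_plus (fun b => rsum (fun j => F j b) m) (F m)); [apply IH; intros; apply H; lia|].
  apply H; lia.
Qed.

Lemma cont_matvec A i : cont p (fun b => matvec p A b i) b.
Proof.
  apply (cont_rsum (fun j b => A i j * b j)). intros j Hj. apply cont_scal, cont_coord; exact Hj.
Qed.

End Continuity.

Fixpoint supnorm (m : nat) (v : nat -> R) : R :=
  match m with O => 0 | S m' => Rmax (supnorm m' v) (Rabs (v m')) end.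

Lemma supnorm_ge0 m v : 0 <= supnorm m v.
Proof. induction m; simpl; [lra|]. eapply Rle_trans; [exact IHm| apply Rmax_l]. Qed.

Lemma Rabs_le_supnorm m v i : (i < m)%nat -> Rabs (v i) <= supnorm m v.
Proof.
  induction m; intros Hi; [lia|]. simpl. destruct (Nat.eq_dec i m) as [->|Hne]; [apply Rmax_r|].
  eapply Rle_trans; [apply IHm; lia| apply Rmax_l].
Qed.

Lemma supnorm_le m v B : 0 <= B -> (forall i, (i < m)%nat -> Rabs (v i) <= B) -> supnorm m v <= B.
Proof.
  induction m; intros HB H; simpl; [exact HB|].
  apply Rmax_lub; [apply IHm; auto; intros; apply H; lia| apply H; lia].
Qed.

Lemma supnorm_ext m u v : (forall i, (i < m)%nat -> u i = v i) -> supnorm m u = supnorm m v.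
Proof.
  induction m; intros H; simpl; [reflexivity|].
  rewrite IHm by (intros; apply H; lia). rewrite H by lia. reflexivity.
Qed.

Lemma supnorm_scal m v s : 0 <= s -> supnorm m (fun i => s * v i) = s * supnorm m v.
Proof.
  intros Hs. induction m; simpl; [ring|].
  rewrite IHm, Rabs_mult, (Rabs_right s) by lra. apply RmaxRmult; exact Hs.
Qed.

Lemma cont_supnorm p m b : (m <= p)%nat -> cont p (supnorm m) b.
Proof.
  induction m; intros Hm; simpl; [apply cont_const|].
  apply (cont_max p b (supnorm m) (fun b => Rabs (b m))); [apply IHm; lia|].
  apply (cont_abs p b (fun b => b m)), cont_coord; lia.
Qed.

Definition depends_on_first (p : nat) (F : (nat -> R) -> R) : Prop :=
  forall b b', (forall i, (i < p)%nat -> b i = b' i) -> F b = F b'.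

Module BoxMinimum.
Import structures.
Import all_boot all_order all_algebra all_classical all_reals all_analysis.
Import Rstruct Rstruct_topology.
Import Order.TTheory GRing.Theory Num.Theory.
Local Open Scope classical_set_scope.
Local Open Scope ring_scope.

Definition fun_of_rV (p : nat) (v : 'rV[R]_p) : nat -> R :=
  fun i => oapp (fun j => v ord0 j) 0 (insub i : option 'I_p).
Arguments fun_of_rV {p}.

Lemma fun_of_rVE {p} (v : 'rV[R]_p) {i} (Hi : (i < p)%N) : fun_of_rV v i = v ord0 (Ordinal Hi).
Proof. by rewrite /fun_of_rV insubT. Qed.

(* Weierstrass theorem, transported from boxes of ['rV[R]_p]. *)
Lemma exists_min_on_box p (B : R) (F : (nat -> R) -> R) :
  (0 <= B)%coqR -> (forall b, cont p F b) -> depends_on_first p F ->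
  exists c, (forall i, (i < p)%coq_nat -> (Rabs (c i) <= B)%coqR) /\
    forall b, (forall i, (i < p)%coq_nat -> (Rabs (b i) <= B)%coqR) -> (F c <= F b)%coqR.
Proof.
move=> /RleP B0 Fcont Fdep.
pose A := [set v : 'rV[R]_p | forall j, `[-B, B]%classic (v ord0 j)].
have cA : compact A.
  by apply: (@rV_compact _ _ (fun=> `[-B, B]%classic)) => _; exact: segment_compact.
have A0 : A !=set0 by exists 0 => j /=; rewrite mxE in_itv /= oppr_le0 B0.
have cf : {within A, continuous (fun v => F (fun_of_rV v))}.
  apply: continuous_subspaceT => v.
  apply/(@cvgrPdist_lt R R^o _ (nbhs v) (nbhs_filter v)) => e /RltP e0.
  have [d [d0 Hd]] := Fcont (fun_of_rV v) e e0.
  apply/nbhs_ballP; exists d => /=; first exact/RltP.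
  move=> w [_ Bw].
  rewrite -RabsE; apply/RltP; rewrite Rabs_minus_sym; apply: Hd => i /ssrnat.ltP Hi.
  rewrite !(fun_of_rVE _ Hi) RabsE distrC; apply/RltP; exact: Bw.
have [c cA' Hmin] := EVT_min_rV A0 cA cf.
exists (fun_of_rV c); split.
  move=> i /ssrnat.ltP Hi; rewrite (fun_of_rVE _ Hi) RabsE; apply/RleP.
  by move: cA'; rewrite inE => /(_ (Ordinal Hi)); rewrite /= in_itv /= ler_norml.
move=> b Hb.
have -> : F b = F (fun_of_rV (\row_(j < p) b j)).
  by apply: Fdep => i /ssrnat.ltP Hi; rewrite (fun_of_rVE _ Hi) mxE.
apply/RleP; apply: Hmin; rewrite inE => j /=; rewrite mxE in_itv /= -ler_norml -RabsE.
exact/RleP/Hb/ssrnat.ltP.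
Qed.

End BoxMinimum.

Definition lqsum (p : nat) (q : R) (v : nat -> R) : R := rsum (fun i => rpow (Rabs (v i)) q) p.

Lemma lqsum_ge0 p q v : 0 <= lqsum p q v.
Proof. apply rsum_nonneg; intros; apply rpow_ge0. Qed.

Lemma lqnorm_ge0 p q v : 0 <= lqnorm p q v.
Proof. apply rpow_ge0. Qed.

Lemma rpow_lqnorm p q v : 0 < q -> rpow (lqnorm p q v) q = lqsum p q v.
Proof. intros Hq. apply rpow_inv_r; [apply lqsum_ge0| exact Hq]. Qed.

Lemma lqnorm_ext p q u v : (forall i, (i < p)%nat -> u i = v i) -> lqnorm p q u = lqnorm p q v.
Proof.
  intros H. unfold lqnorm. f_equal. apply rsum_ext. intros i Hi; rewrite H by exact Hi; reflexivity.
Qed.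

Lemma lqnorm_zero p q v : 0 < q -> (forall i, (i < p)%nat -> v i = 0) -> lqnorm p q v = 0.
Proof.
  intros Hq H. unfold lqnorm.
  rewrite (rsum_ext _ (fun _ => 0)).
  2:{ intros i Hi. rewrite H, Rabs_R0 by exact Hi. apply rpow_nonpos; lra. }
  rewrite rsum_const, Rmult_0_r. apply rpow_nonpos; lra.
Qed.

Lemma lqnorm_eq0 p q v : lqnorm p q v = 0 -> forall i, (i < p)%nat -> v i = 0.
Proof.
  intros H i Hi. apply rpow_eq0 in H.
  assert (H1 : rpow (Rabs (v i)) q <= lqsum p q v).
  { apply (rsum_ge_term (fun i => rpow (Rabs (v i)) q)); [intros; apply rpow_ge0| exact Hi]. }
  assert (H2 : rpow (Rabs (v i)) q = 0)
    by (generalize (rpow_ge0 (Rabs (v i)) q); unfold lqsum in *; lra).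
  apply rpow_eq0 in H2. destruct (Req_dec (v i) 0) as [|Hne]; [assumption|].
  exfalso. apply (Rabs_no_R0 _ Hne). generalize (Rabs_pos (v i)). lra.
Qed.

Lemma lqnorm_scal p q v s : 0 < q -> 0 <= s -> lqnorm p q (fun i => s * v i) = s * lqnorm p q v.
Proof.
  intros Hq Hs. unfold lqnorm.
  rewrite (rsum_ext _ (fun i => rpow s q * rpow (Rabs (v i)) q)).
  2:{ intros i _. rewrite Rabs_mult, (Rabs_right s) by lra.
      apply rpow_mult_distr; [lra| apply Rabs_pos]. }
  rewrite rsum_scal, rpow_mult_distr by (apply rpow_ge0 || apply lqsum_ge0).
  rewrite rpow_inv_l by lra. reflexivity.
Qed.

(* Convexity of [t |-> t^q] applied to [(x + y)/2 = A (mu (x/a) + (1 - mu) (y/b))], where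
   [A = (a + b)/2] and [mu = a/(a + b)]. *)
Lemma rpow_midpoint_le q x y a b : 1 <= q -> 0 <= x -> 0 <= y -> 0 < a -> 0 < b ->
  rpow ((x + y) / 2) q <=
  rpow ((a + b) / 2) q * (a / (a + b) / rpow a q * rpow x q + b / (a + b) / rpow b q * rpow y q).
Proof.
  intros Hq Hx Hy Ha Hb.
  set (mu := a / (a + b)).
  assert (Hmu : 0 <= mu <= 1).
  { unfold mu. split; [apply Rlt_le, Rdiv_lt_0_compat; lra|].
    apply Rmult_le_reg_r with (a + b); [lra|]. unfold Rdiv. rewrite Rmult_assoc, Rinv_l; lra. }
  assert (E : (x + y) / 2 = (a + b) / 2 * (mu * (x * / a) + (1 - mu) * (y * / b)))
    by (unfold mu; field; lra).
  assert (Hxa : 0 <= x * / a) by (apply Rmult_le_pos; [lra| left; apply Rinv_0_lt_compat; lra]).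
  assert (Hyb : 0 <= y * / b) by (apply Rmult_le_pos; [lra| left; apply Rinv_0_lt_compat; lra]).
  rewrite E, rpow_mult_distr by (try lra; apply Rplus_le_le_0_compat; apply Rmult_le_pos; lra).
  apply Rmult_le_compat_l; [apply rpow_ge0|].
  eapply Rle_trans; [apply rpow_convex; auto|].
  rewrite !rpow_mult_distr, !rpow_Rinv by (try apply Rlt_le, Rinv_0_lt_compat; lra).
  right. unfold mu. field.
  repeat split; try apply Rgt_not_eq, rpow_gt0; lra.
Qed.

Lemma lqnorm_midpoint_le q p u v w a b : 1 <= q -> 0 < a -> 0 < b ->
  lqnorm p q u <= a -> lqnorm p q v <= b ->
  (forall i, (i < p)%nat -> Rabs (w i) <= (Rabs (u i) + Rabs (v i)) / 2) ->
  lqnorm p q w <= (a + b) / 2.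
Proof.
  intros Hq Ha Hb Hu Hv Hw.
  set (C := rpow ((a + b) / 2) q). set (al := a / (a + b) / rpow a q).
  set (be := b / (a + b) / rpow b q).
  assert (Hpointwise : lqsum p q w <= C * (al * lqsum p q u + be * lqsum p q v)).
  { unfold lqsum. rewrite <- !rsum_scal, <- rsum_plus, <- rsum_scal. apply rsum_le. intros i Hi.
    eapply Rle_trans; [apply rpow_le_compat; [lra| split; [apply Rabs_pos| exact (Hw i Hi)]]|].
    apply rpow_midpoint_le; auto using Rabs_pos. }
  assert (Hbound : forall c s, 0 < c -> s <= rpow c q -> c / (a + b) / rpow c q * s <= c / (a + b)).
  { intros c s Hc Hs. assert (Rc := rpow_gt0 c q Hc).
    apply Rmult_le_reg_r with (rpow c q * (a + b)); [apply Rmult_lt_0_compat; lra|].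
    field_simplify; [| lra| lra]. apply Rmult_le_compat_l; lra. }
  assert (Hua : al * lqsum p q u <= a / (a + b)).
  { apply Hbound; [exact Ha|]. rewrite <- rpow_lqnorm by lra.
    apply rpow_le_compat; [lra| split; [apply lqnorm_ge0| exact Hu]]. }
  assert (Hvb : be * lqsum p q v <= b / (a + b)).
  { apply Hbound; [exact Hb|]. rewrite <- rpow_lqnorm by lra.
    apply rpow_le_compat; [lra| split; [apply lqnorm_ge0| exact Hv]]. }
  assert (Hsum : lqsum p q w <= C).
  { eapply Rle_trans; [exact Hpointwise|]. rewrite <- (Rmult_1_r C) at 2.
    apply Rmult_le_compat_l; [apply rpow_ge0|].
    replace 1 with (a / (a + b) + b / (a + b)) by (field; lra). lra. }
  unfold lqnorm. fold (lqsum p q w).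
  rewrite <- (rpow_inv_l ((a + b) / 2) q) by lra.
  apply rpow_le_compat; [apply Rinv_0_lt_compat; lra| split; [apply lqsum_ge0| exact Hsum]].
Qed.

Lemma lqnorm_midpoint q p u v w : 1 <= q ->
  (forall i, (i < p)%nat -> Rabs (w i) <= (Rabs (u i) + Rabs (v i)) / 2) ->
  lqnorm p q w <= (lqnorm p q u + lqnorm p q v) / 2.
Proof.
  intros Hq Hw. apply Rle_plus_epsilon. intros eps Heps.
  replace ((lqnorm p q u + lqnorm p q v) / 2 + eps)
    with ((lqnorm p q u + eps + (lqnorm p q v + eps)) / 2) by field.
  assert (Hu := lqnorm_ge0 p q u). assert (Hv := lqnorm_ge0 p q v).
  apply lqnorm_midpoint_le with u v; auto; lra.
Qed.

Lemma sqnorm_first_axis m z : (1 <= m)%nat ->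
  sqnorm m (fun i => if Nat.eqb i 0 then z else 0) = z ^ 2.
Proof.
  intros Hm. destruct m as [|m]; [lia|]. clear Hm.
  unfold sqnorm. induction m as [|m IH]; [cbn; ring|].
  change (rsum ?f (S (S m))) with (rsum f (S m) + f (S m)). rewrite IH. cbn. ring.
Qed.

Section LinkFunction.
Variables (n : nat) (g : R -> R).
Hypothesis Hg : link_function n g.

Lemma link_strict_mono x y : 0 <= x -> x < y -> g x < g y.
Proof. destruct Hg as [_ [_ [H _]]]. apply H. Qed.

Lemma link_mono x y : 0 <= x -> x <= y -> g x <= g y.
Proof.
  intros Hx Hxy. destruct (Req_dec x y) as [->|Hne]; [lra|].
  left; apply link_strict_mono; lra.
Qed.

Lemma link_ge0 x : 0 <= x -> 0 <= g x.
Proof. intros Hx. destruct Hg as [H0 _]. rewrite <- H0. apply link_mono; lra. Qed.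

Lemma link_continuous x : 0 <= x -> forall eps, 0 < eps -> exists delta, 0 < delta /\
  forall y, 0 <= y -> Rabs (y - x) < delta -> Rabs (g y - g x) < eps.
Proof. destruct Hg as [_ [H _]]. apply H. Qed.

Definition strictly_convex (phi : R -> R) : Prop :=
  forall x y t, x <> y -> 0 < t < 1 -> phi (t * x + (1 - t) * y) < t * phi x + (1 - t) * phi y.

(* Restrict the strict convexity of [alpha |-> g (||alpha||^2)] to the first coordinate axis. *)
Lemma link_sq_strictly_convex : (1 <= n)%nat -> strictly_convex (fun x => g (x ^ 2)).
Proof.
  intros Hn x y t Hxy Ht. destruct Hg as [_ [_ [_ [_ Hconv]]]].
  set (e0 := fun (x : R) (i : nat) => if Nat.eqb i 0 then x else 0).
  assert (Hsq : forall z, sqnorm n (e0 z) = z ^ 2) by (intros; apply sqnorm_first_axis, Hn).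
  assert (H := Hconv (e0 x) (e0 y) t ltac:(exists 0%nat; cbn; split; [lia| exact Hxy]) Ht).
  rewrite !Hsq in H. rewrite <- Hsq.
  replace (sqnorm n (e0 (t * x + (1 - t) * y)))
    with (sqnorm n (fun i => t * e0 x i + (1 - t) * e0 y i)); [exact H|].
  unfold sqnorm. apply rsum_ext. intros i _. unfold e0. destruct (Nat.eqb i 0); ring.
Qed.

End LinkFunction.

Definition residual (n p : nat) (Y : nat -> R) (X : nat -> nat -> R) (b : nat -> R) : R :=
  sqnorm n (fun i => Y i - matvec p X b i).

Definition penalty (p k : nat) (M : nat -> nat -> nat -> R) (q lam b : nat -> R) : R :=
  rsum (fun j => lam j * lqnorm p (q j) (matvec p (M j) b)) k.

Lemma objective_split n p k g Y X M q lam b :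
  objective n p k g Y X M q lam b = g (residual n p Y X b) + penalty p k M q lam b.
Proof. reflexivity. Qed.

Lemma matvec_ext p A b b' : (forall i, (i < p)%nat -> b i = b' i) -> matvec p A b = matvec p A b'.
Proof. intros H. extensionality i. unfold matvec. apply rsum_ext. intros j Hj; rewrite H; auto. Qed.

Lemma matvec_scal p A b s i : matvec p A (fun j => s * b j) i = s * matvec p A b i.
Proof. unfold matvec. rewrite <- rsum_scal. apply rsum_ext; intros; ring. Qed.

Lemma matvec_zero p A i : matvec p A (fun _ => 0) i = 0.
Proof.
  unfold matvec. rewrite (rsum_ext _ (fun _ => 0)) by (intros; ring). rewrite rsum_const; ring.
Qed.

Lemma matvec_midpoint p A b b0 i :
  matvec p A (fun j => (b j + b0 j) / 2) i = (matvec p A b i + matvec p A b0 i) / 2.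
Proof.
  unfold matvec. rewrite (rsum_ext _ (fun j => / 2 * (A i j * b j) + / 2 * (A i j * b0 j)))
    by (intros; field).
  rewrite rsum_plus, !rsum_scal. field.
Qed.

Section Penalty.
Variables (p k : nat) (M : nat -> nat -> nat -> R) (q : nat -> R).
Hypothesis Hq : forall j, (j < k)%nat -> 1 <= q j.

Lemma penalty_ge0 lam b : pos_vec k lam -> 0 <= penalty p k M q lam b.
Proof.
  intros Hl. apply rsum_nonneg. intros j Hj.
  apply Rmult_le_pos; [left; apply Hl; exact Hj| apply lqnorm_ge0].
Qed.

Lemma penalty_ge_term lam b j : pos_vec k lam -> (j < k)%nat ->
  lam j * lqnorm p (q j) (matvec p (M j) b) <= penalty p k M q lam b.
Proof.
  intros Hl Hj.
  apply (rsum_ge_term (fun j => lam j * lqnorm p (q j) (matvec p (M j) b))); [|exact Hj].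
  intros j' Hj'. apply Rmult_le_pos; [left; apply Hl; exact Hj'| apply lqnorm_ge0].
Qed.

Lemma penalty_ext lam b b' : (forall i, (i < p)%nat -> b i = b' i) ->
  penalty p k M q lam b = penalty p k M q lam b'.
Proof.
  intros H. unfold penalty. apply rsum_ext. intros j _. rewrite (matvec_ext p (M j) b b' H).
  reflexivity.
Qed.

Lemma penalty_scal lam b s : 0 <= s ->
  penalty p k M q lam (fun i => s * b i) = s * penalty p k M q lam b.
Proof.
  intros Hs. unfold penalty. rewrite <- rsum_scal. apply rsum_ext. intros j Hj.
  rewrite (lqnorm_ext p (q j) _ (fun i => s * matvec p (M j) b i)) by (intros; apply matvec_scal).
  rewrite lqnorm_scal by (try lra; specialize (Hq j Hj); lra). ring.
Qed.

Lemma penalty_zero lam : penalty p k M q lam (fun _ => 0) = 0.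
Proof.
  unfold penalty. rewrite (rsum_ext _ (fun _ => 0)); [rewrite rsum_const; ring|].
  intros j Hj. rewrite lqnorm_zero; [ring| specialize (Hq j Hj); lra| intros; apply matvec_zero].
Qed.

Lemma penalty_midpoint lam b b0 : pos_vec k lam ->
  penalty p k M q lam (fun i => (b i + b0 i) / 2)
  <= (penalty p k M q lam b + penalty p k M q lam b0) / 2.
Proof.
  intros Hl. unfold penalty.
  replace ((rsum (fun j => lam j * lqnorm p (q j) (matvec p (M j) b)) k +
            rsum (fun j => lam j * lqnorm p (q j) (matvec p (M j) b0)) k) / 2) with
   (rsum (fun j => / 2 * (lam j * lqnorm p (q j) (matvec p (M j) b)
                         + lam j * lqnorm p (q j) (matvec p (M j) b0))) k)
   by (rewrite rsum_scal, rsum_plus; field).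
  apply rsum_le. intros j Hj.
  assert (H : lqnorm p (q j) (matvec p (M j) (fun i => (b i + b0 i) / 2)) <=
     (lqnorm p (q j) (matvec p (M j) b) + lqnorm p (q j) (matvec p (M j) b0)) / 2).
  { apply lqnorm_midpoint; [apply Hq; exact Hj|]. intros i Hi. rewrite matvec_midpoint.
    unfold Rdiv. rewrite Rabs_mult, (Rabs_right (/ 2)) by lra.
    apply Rmult_le_compat_r; [lra| apply Rabs_triang]. }
  assert (Hlj := Hl j Hj). apply Rmult_le_compat_l with (r := lam j) in H; lra.
Qed.

Lemma cont_penalty lam b : cont p (penalty p k M q lam) b.
Proof.
  apply (cont_rsum p b (fun j b => lam j * lqnorm p (q j) (matvec p (M j) b))).
  intros j Hj. assert (Hqj := Hq j Hj). apply cont_scal.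
  apply (cont_rpow p b (/ q j) (fun b => rsum (fun i => rpow (Rabs (matvec p (M j) b i)) (q j)) p));
    [apply Rinv_0_lt_compat; lra|].
  apply (cont_rsum p b (fun i b => rpow (Rabs (matvec p (M j) b i)) (q j))). intros i Hi.
  apply (cont_rpow p b (q j) (fun b => Rabs (matvec p (M j) b i))); [lra|].
  apply (cont_abs p b (fun b => matvec p (M j) b i)), cont_matvec.
Qed.

End Penalty.

Section Model.
Variables (n p k : nat) (Y : nat -> R) (X : nat -> nat -> R) (g : R -> R)
  (M : nat -> nat -> nat -> R) (q : nat -> R).
Hypothesis Hg : link_function n g.
Hypothesis Hq : forall j, (j < k)%nat -> 1 <= q j.

Lemma residual_ge0 b : 0 <= residual n p Y X b.
Proof. apply sqnorm_nonneg. Qed.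

Lemma residual_zero : residual n p Y X (fun _ => 0) = sqnorm n Y.
Proof. unfold residual, sqnorm. apply rsum_ext. intros i _. rewrite matvec_zero. f_equal; ring. Qed.

Lemma cont_residual b : cont p (residual n p Y X) b.
Proof.
  apply (cont_rsum p b (fun i b => (Y i - matvec p X b i) ^ 2)). intros i _.
  apply (cont_sq p b (fun b => Y i - matvec p X b i)).
  apply cont_minus; [apply cont_const| apply cont_matvec].
Qed.

Lemma cont_objective lam b : cont p (objective n p k g Y X M q lam) b.
Proof.
  apply cont_plus; [| apply cont_penalty; exact Hq].
  apply (cont_comp p b g (fun x => 0 <= x) (residual n p Y X));
    [intros; apply residual_ge0| apply cont_residual|].
  intros e He. destruct (link_continuous n g Hg _ (residual_ge0 b) e He) as [a [Ha H]].
  exists a; split; [exact Ha|]. exact H.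
Qed.

Lemma objective_depends_on_first lam : depends_on_first p (objective n p k g Y X M q lam).
Proof.
  intros b b' H. rewrite !objective_split, (penalty_ext p k M q lam b b' H).
  unfold residual. rewrite (matvec_ext p X b b' H). reflexivity.
Qed.

Lemma objective_zero lam : objective n p k g Y X M q lam (fun _ => 0) = g (sqnorm n Y).
Proof. rewrite objective_split, penalty_zero, residual_zero by exact Hq. ring. Qed.

Hypothesis Hker : forall b : nat -> R,
  (forall j i, (j < k)%nat -> (i < p)%nat -> matvec p (M j) b i = 0) ->
  forall i, (i < p)%nat -> b i = 0.

Lemma penalty_eq0 lam b : pos_vec k lam -> penalty p k M q lam b = 0 ->
  forall i, (i < p)%nat -> b i = 0.
Proof.
  intros Hl H0. apply Hker. intros j i Hj Hi. apply (lqnorm_eq0 p (q j)); [| exact Hi].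
  assert (T := penalty_ge_term p k M q lam b j Hl Hj).
  assert (Hlj := Hl j Hj). assert (Hn := lqnorm_ge0 p (q j) (matvec p (M j) b)).
  rewrite H0 in T. nra.
Qed.

(* The minimum of [max (penalty b) (1 - supnorm b)] on the unit box is positive, and equals a
   minimum of the penalty over the unit sphere of the sup-norm; conclude by homogeneity. *)
Lemma penalty_coercive lam : pos_vec k lam ->
  exists c0, 0 < c0 /\ forall b, c0 * supnorm p b <= penalty p k M q lam b.
Proof.
  intros Hl.
  set (J := fun b => Rmax (penalty p k M q lam b) (1 - supnorm p b)).
  assert (HJc : forall b, cont p J b).
  { intros b. apply cont_max; [apply cont_penalty; exact Hq|].
    apply cont_minus; [apply cont_const| apply cont_supnorm; lia]. }
  assert (HJd : depends_on_first p J).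
  { intros b b' H. unfold J. rewrite (penalty_ext p k M q lam b b' H), (supnorm_ext p b b' H).
    reflexivity. }
  destruct (BoxMinimum.exists_min_on_box p 1 J ltac:(lra) HJc HJd) as [c [_ Hmin]].
  assert (Hpos : 0 < J c).
  { unfold J. destruct (Rle_dec (penalty p k M q lam c) 0) as [h|h].
    2:{ eapply Rlt_le_trans; [| apply Rmax_l]. lra. }
    assert (Hz := penalty_eq0 lam c Hl ltac:(generalize (penalty_ge0 p k M q lam c Hl); lra)).
    assert (Hc0 : supnorm p c = 0).
    { apply Rle_antisym; [| apply supnorm_ge0]. apply supnorm_le; [lra|].
      intros i Hi. rewrite Hz, Rabs_R0 by exact Hi. lra. }
    eapply Rlt_le_trans; [| apply Rmax_r]. lra. }
  exists (J c); split; [exact Hpos|]. intros b.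
  set (s := supnorm p b). assert (Hs : 0 <= s) by apply supnorm_ge0.
  destruct (Req_dec s 0) as [Hs0|Hs0].
  { rewrite Hs0, Rmult_0_r. apply penalty_ge0; exact Hl. }
  set (v := fun i => / s * b i).
  assert (Hv : forall i, (i < p)%nat -> Rabs (v i) <= 1).
  { intros i Hi. unfold v. rewrite Rabs_mult, Rabs_right by (left; apply Rinv_0_lt_compat; lra).
    apply Rmult_le_reg_l with s; [lra|]. field_simplify; [| lra].
    apply Rabs_le_supnorm; exact Hi. }
  assert (HJv : J v = penalty p k M q lam v).
  { unfold J, v. rewrite supnorm_scal by (left; apply Rinv_0_lt_compat; lra). fold s.
    rewrite Rinv_l, Rminus_diag by exact Hs0.
    apply Rmax_left, penalty_ge0; exact Hl. }
  assert (Hb : penalty p k M q lam b = s * penalty p k M q lam v).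
  { unfold v. rewrite <- penalty_scal by (exact Hq || lra).
    apply penalty_ext. intros i _. field. lra. }
  rewrite Hb, (Rmult_comm (J c)). apply Rmult_le_compat_l; [lra|].
  rewrite <- HJv. apply Hmin, Hv.
Qed.

(* Outside the box of radius [(g ||Y||^2 + 1)/c0] the penalty alone exceeds the objective at 0. *)
Lemma exists_minimizer lam : pos_vec k lam -> exists b, is_minimizer n p k g Y X M q lam b.
Proof.
  intros Hl. destruct (penalty_coercive lam Hl) as [c0 [Hc0 Hco]].
  set (W := g (sqnorm n Y)). assert (HW : 0 <= W) by (apply (link_ge0 n g Hg), sqnorm_nonneg).
  set (B := (W + 1) / c0). assert (HB : 0 < B) by (apply Rdiv_lt_0_compat; lra).
  destruct (BoxMinimum.exists_min_on_box p B _ ltac:(lra) (cont_objective lam)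
              (objective_depends_on_first lam)) as [c [_ Hmin]].
  exists c. intros b.
  destruct (classic (forall i, (i < p)%nat -> Rabs (b i) <= B)) as [Hin|Hout]; [apply Hmin, Hin|].
  apply not_all_ex_not in Hout. destruct Hout as [i Hi].
  apply imply_to_and in Hi. destruct Hi as [Hi Hbi]. apply Rnot_le_lt in Hbi.
  assert (H0 := Hmin (fun _ => 0) ltac:(intros; cbv beta; rewrite Rabs_R0; lra)).
  rewrite objective_zero in H0. fold W in H0.
  assert (HPb : c0 * B < penalty p k M q lam b).
  { eapply Rlt_le_trans; [| apply Hco]. apply Rmult_lt_compat_l; [exact Hc0|].
    eapply Rlt_le_trans; [exact Hbi| apply Rabs_le_supnorm; exact Hi]. }
  assert (Hc0B : c0 * B = W + 1) by (unfold B; field; lra).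
  assert (Hgb := link_ge0 n g Hg _ (residual_ge0 b)).
  rewrite (objective_split n p k g Y X M q lam b). lra.
Qed.

End Model.

Definition midgap (phi : R -> R) (c t : R) : R := (phi t + phi c) / 2 - phi ((t + c) / 2).

Section MidpointGap.
Variable phi : R -> R.
Hypothesis Hphi : strictly_convex phi.

Lemma strictly_convex_le x y t : 0 < t < 1 ->
  phi (t * x + (1 - t) * y) <= t * phi x + (1 - t) * phi y.
Proof.
  intros Ht. destruct (Req_dec x y) as [->|Hne]; [|left; apply Hphi; assumption].
  replace (t * y + (1 - t) * y) with y by ring. right; ring.
Qed.

Lemma convex_chord a x b : a <= x <= b -> (b - a) * phi x <= (b - x) * phi a + (x - a) * phi b.
Proof.
  intros [Hax Hxb]. destruct (Req_dec x a) as [->|Ha]; [right; ring|].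
  destruct (Req_dec x b) as [->|Hb]; [right; ring|].
  set (t := (b - x) / (b - a)).
  assert (Ht : 0 < t < 1).
  { unfold t. split; [apply Rdiv_lt_0_compat; lra|].
    apply (Rmult_lt_reg_r (b - a)); [lra|]. unfold Rdiv. rewrite Rmult_assoc, Rinv_l; lra. }
  assert (H := strictly_convex_le a b t Ht).
  replace (t * a + (1 - t) * b) with x in H by (unfold t; field; lra).
  apply Rmult_le_compat_l with (r := b - a) in H; [|lra].
  replace ((b - a) * (t * phi a + (1 - t) * phi b)) with ((b - x) * phi a + (x - a) * phi b)
    in H by (unfold t; field; lra).
  exact H.
Qed.

Lemma midgap_mono_r c t1 t2 : c <= t1 <= t2 -> midgap phi c t1 <= midgap phi c t2.
Proof.
  intros [H1 H2]. destruct (Req_dec t1 t2) as [->|Hne]; [lra|].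
  set (m1 := (t1 + c) / 2). set (m2 := (t2 + c) / 2).
  assert (K1 := convex_chord m1 m2 t2 ltac:(unfold m1, m2; lra)).
  assert (K2 := convex_chord m1 t1 t2 ltac:(unfold m1; lra)).
  unfold midgap. fold m1 m2.
  apply (Rmult_le_reg_l (t2 - m1)); [unfold m1; lra|].
  assert (E1 : 2 * (t2 - m2) + (t2 - t1) = 2 * (t2 - m1)) by (unfold m1, m2; field).
  assert (E2 : 2 * (m2 - m1) + (t1 - m1) = t2 - m1) by (unfold m1, m2; field).
  nra.
Qed.

Lemma midgap_mono_l c t1 t2 : t2 <= t1 <= c -> midgap phi c t1 <= midgap phi c t2.
Proof.
  intros [H1 H2]. destruct (Req_dec t1 t2) as [->|Hne]; [lra|].
  set (m1 := (t1 + c) / 2). set (m2 := (t2 + c) / 2).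
  assert (K1 := convex_chord t2 m2 m1 ltac:(unfold m1, m2; lra)).
  assert (K2 := convex_chord t2 t1 m1 ltac:(unfold m1; lra)).
  unfold midgap. fold m1 m2.
  apply (Rmult_le_reg_l (m1 - t2)); [unfold m1; lra|].
  assert (E1 : 2 * (m1 - m2) + (m1 - t1) = m1 - t2) by (unfold m1, m2; field).
  assert (E2 : 2 * (m2 - t2) + (t1 - t2) = 2 * (m1 - t2)) by (unfold m1, m2; field).
  nra.
Qed.

Lemma midgap_pos c t : t <> c -> 0 < midgap phi c t.
Proof.
  intros Hne. unfold midgap. assert (h := Hphi t c (/ 2) Hne ltac:(lra)).
  replace (/ 2 * t + (1 - / 2) * c) with ((t + c) / 2) in h by field. lra.
Qed.

(* By monotonicity on each side of [c], a gap below those at [c +- eps] forces [|t - c| < eps]. *)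
Lemma midgap_small c eps : 0 < eps ->
  exists eta, 0 < eta /\ forall t, midgap phi c t < eta -> Rabs (t - c) < eps.
Proof.
  intros He.
  assert (P1 := midgap_pos c (c + eps) ltac:(lra)).
  assert (P2 := midgap_pos c (c - eps) ltac:(lra)).
  exists (Rmin (midgap phi c (c + eps)) (midgap phi c (c - eps))).
  split; [apply Rmin_glb_lt; lra|].
  intros t Ht. assert (Hm1 := Rmin_l (midgap phi c (c + eps)) (midgap phi c (c - eps))).
  assert (Hm2 := Rmin_r (midgap phi c (c + eps)) (midgap phi c (c - eps))).
  apply Rnot_le_lt. intros h. destruct (Rle_dec c t) as [Hct|Hct].
  - rewrite Rabs_right in h by lra.
    assert (midgap phi c (c + eps) <= midgap phi c t) by (apply midgap_mono_r; lra). lra.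
  - rewrite Rabs_left in h by lra.
    assert (midgap phi c (c - eps) <= midgap phi c t) by (apply midgap_mono_l; lra). lra.
Qed.

End MidpointGap.

Definition dot (m : nat) (a b : nat -> R) : R := rsum (fun i => a i * b i) m.

Lemma cauchy_schwarz_sq m a b : dot m a b ^ 2 <= sqnorm m a * sqnorm m b.
Proof.
  induction m as [|m IH]; [unfold dot, sqnorm; simpl; lra|].
  change (dot (S m) a b) with (dot m a b + a m * b m).
  change (sqnorm (S m) a) with (sqnorm m a + a m ^ 2).
  change (sqnorm (S m) b) with (sqnorm m b + b m ^ 2).
  set (S := dot m a b) in *. set (A := sqnorm m a) in *. set (B := sqnorm m b) in *.
  assert (HA : 0 <= A) by apply sqnorm_nonneg. assert (HB : 0 <= B) by apply sqnorm_nonneg.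
  set (x := a m). set (y := b m).
  (* [2 S x y <= A y^2 + B x^2] since [(2 S x y)^2 <= 4 A B x^2 y^2 <= (A y^2 + B x^2)^2] *)
  assert (key : 2 * S * x * y <= A * y ^ 2 + B * x ^ 2).
  { assert (h0 : 0 <= x ^ 2 * y ^ 2) by nra.
    assert (h1 : (2 * S * x * y) ^ 2 <= (A * y ^ 2 + B * x ^ 2) ^ 2).
    { assert (h3 : 4 * (x ^ 2 * y ^ 2) * S ^ 2 <= 4 * (x ^ 2 * y ^ 2) * (A * B))
        by (apply Rmult_le_compat_l; lra).
      assert (0 <= (A * y ^ 2 - B * x ^ 2) ^ 2) by apply pow2_ge_0. nra. }
    apply Rsqr_incr_0_var; [unfold Rsqr; nra| nra]. }
  nra.
Qed.

Lemma cauchy_schwarz m a b : dot m a b <= sqrt (sqnorm m a) * sqrt (sqnorm m b).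
Proof.
  rewrite <- sqrt_mult by apply sqnorm_nonneg.
  destruct (Rle_dec (dot m a b) 0) as [h|h]; [eapply Rle_trans; [exact h| apply sqrt_pos]|].
  rewrite <- (sqrt_pow2 (dot m a b)) by lra. apply sqrt_le_1_alt, cauchy_schwarz_sq.
Qed.

Lemma sqnorm_midpoint_le m a b :
  sqnorm m (fun i => (a i + b i) / 2) <= ((sqrt (sqnorm m a) + sqrt (sqnorm m b)) / 2) ^ 2.
Proof.
  assert (E : sqnorm m (fun i => (a i + b i) / 2) = (sqnorm m a + sqnorm m b + 2 * dot m a b) / 4).
  { unfold sqnorm, dot.
    rewrite (rsum_ext _ (fun i => (/ 4 * a i ^ 2 + / 4 * b i ^ 2) + / 2 * (a i * b i)))
      by (intros; field).
    rewrite !rsum_plus, !rsum_scal. field. }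
  rewrite E. assert (H := cauchy_schwarz m a b).
  rewrite <- (pow2_sqrt (sqnorm m a)) at 1 by apply sqnorm_nonneg.
  rewrite <- (pow2_sqrt (sqnorm m b)) at 1 by apply sqnorm_nonneg.
  nra.
Qed.

Section Minimizers.
Variables (n p k : nat) (Y : nat -> R) (X : nat -> nat -> R) (g : R -> R)
  (M : nat -> nat -> nat -> R) (q : nat -> R).
Hypothesis Hg : link_function n g.
Hypothesis Hq : forall j, (j < k)%nat -> 1 <= q j.

Local Notation r := (residual n p Y X).
Local Notation Mnorm b j := (lqnorm p (q j) (matvec p (M j) b)).

Lemma residual_midpoint_le b b0 :
  r (fun i => (b i + b0 i) / 2) <= ((sqrt (r b) + sqrt (r b0)) / 2) ^ 2.
Proof.
  unfold residual. rewrite <- sqnorm_midpoint_le. right. unfold sqnorm. apply rsum_ext.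
  intros i _. rewrite matvec_midpoint. f_equal. field.
Qed.

(* Compare [b] and [b0] with their midpoint, in the objectives for [lam] and [lam0] respectively. *)
Lemma minimizers_midgap lam lam0 b b0 : pos_vec k lam -> pos_vec k lam0 ->
  is_minimizer n p k g Y X M q lam b -> is_minimizer n p k g Y X M q lam0 b0 ->
  midgap (fun x => g (x ^ 2)) (sqrt (r b0)) (sqrt (r b)) <=
  rsum (fun j => (lam0 j - lam j) * (Mnorm b j - Mnorm b0 j)) k / 4.
Proof.
  intros Hl Hl0 Hb Hb0.
  assert (H1 := Hb (fun i => (b i + b0 i) / 2)). assert (H2 := Hb0 (fun i => (b i + b0 i) / 2)).
  rewrite !objective_split in H1, H2.
  assert (P1 := penalty_midpoint p k M q Hq lam b b0 Hl).
  assert (P2 := penalty_midpoint p k M q Hq lam0 b b0 Hl0).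
  assert (Hgm := link_mono n g Hg _ _ (residual_ge0 n p Y X _) (residual_midpoint_le b b0)).
  rewrite rsum_mult_sub. unfold midgap.
  rewrite !pow2_sqrt by apply residual_ge0.
  unfold penalty in *. lra.
Qed.

Lemma residual_unique lam b1 b2 : pos_vec k lam ->
  is_minimizer n p k g Y X M q lam b1 -> is_minimizer n p k g Y X M q lam b2 -> r b1 = r b2.
Proof.
  intros Hl H1 H2.
  destruct (Nat.eq_dec n 0) as [Hn|Hn]; [unfold residual; rewrite Hn; reflexivity|].
  assert (Hconv := link_sq_strictly_convex n g Hg ltac:(lia)).
  assert (C := minimizers_midgap lam lam b1 b2 Hl Hl H1 H2).
  rewrite (rsum_ext _ (fun _ => 0)), rsum_const in C by (intros; ring).
  destruct (Req_dec (sqrt (r b1)) (sqrt (r b2))) as [E|E].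
  - rewrite <- (pow2_sqrt (r b1)), <- (pow2_sqrt (r b2)), E by apply residual_ge0. reflexivity.
  - assert (P := midgap_pos (fun x => g (x ^ 2)) Hconv _ _ E). lra.
Qed.

Lemma minimizer_bounds lam b : pos_vec k lam -> is_minimizer n p k g Y X M q lam b ->
  penalty p k M q lam b <= g (sqnorm n Y) /\ r b <= sqnorm n Y.
Proof.
  intros Hl Hb. assert (H := Hb (fun _ => 0)).
  rewrite objective_zero, objective_split in H by exact Hq.
  assert (G := link_ge0 n g Hg _ (residual_ge0 n p Y X b)).
  assert (P := penalty_ge0 p k M q lam b Hl).
  split; [lra|]. apply Rnot_lt_le. intros h.
  assert (g (sqnorm n Y) < g (r b))
    by (apply (link_strict_mono n g Hg); [apply sqnorm_nonneg| lra]).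
  lra.
Qed.

(* A minimizer [b] for [lam] has [lam_j ||M_j b|| <= g ||Y||^2], and [lam_j >= L/2] near [lam0]. *)
Lemma penalty_gap_bound lam lam0 b b0 L : 0 < L -> (forall j, (j < k)%nat -> L <= lam0 j) ->
  pos_vec k lam -> pos_vec k lam0 -> edist k lam lam0 < L / 2 ->
  is_minimizer n p k g Y X M q lam b -> is_minimizer n p k g Y X M q lam0 b0 ->
  rsum (fun j => (lam0 j - lam j) * (Mnorm b j - Mnorm b0 j)) k
  <= INR k * (edist k lam lam0 * (3 * g (sqnorm n Y) / L)).
Proof.
  intros HL HLj Hl Hl0 Hd Hb Hb0. set (W := g (sqnorm n Y)).
  destruct (minimizer_bounds lam b Hl Hb) as [PB _].
  destruct (minimizer_bounds lam0 b0 Hl0 Hb0) as [PB0 _]. fold W in PB, PB0.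
  rewrite <- rsum_const. apply rsum_le. intros j Hj.
  assert (Hdj := edist_ge_coord k lam lam0 j Hj).
  assert (Hlam : L / 2 <= lam j).
  { generalize (Rle_abs (lam0 j - lam j)). rewrite Rabs_minus_sym. generalize (HLj j Hj). lra. }
  assert (T := penalty_ge_term p k M q lam b j Hl Hj).
  assert (T0 := penalty_ge_term p k M q lam0 b0 j Hl0 Hj).
  assert (Hu : 0 <= Mnorm b j) by apply lqnorm_ge0.
  assert (Hv : 0 <= Mnorm b0 j) by apply lqnorm_ge0.
  assert (B1 : L / 2 * Mnorm b j <= W) by (generalize (HLj j Hj); nra).
  assert (B0 : L * Mnorm b0 j <= W) by (generalize (HLj j Hj); nra).
  assert (Hsum : Mnorm b j + Mnorm b0 j <= 3 * W / L).
  { apply Rmult_le_reg_l with L; [exact HL|]. field_simplify; lra. }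
  eapply Rle_trans; [apply Rle_abs|]. rewrite Rabs_mult, Rabs_minus_sym.
  apply Rmult_le_compat; [apply Rabs_pos| apply Rabs_pos| exact Hdj|].
  unfold Rabs. destruct Rcase_abs; lra.
Qed.

Lemma sqrt_residual_continuous lam0 b0 : (1 <= n)%nat -> pos_vec k lam0 ->
  is_minimizer n p k g Y X M q lam0 b0 ->
  forall eps, 0 < eps -> exists delta, 0 < delta /\ forall lam b, pos_vec k lam ->
    edist k lam lam0 < delta -> is_minimizer n p k g Y X M q lam b ->
    Rabs (sqrt (r b) - sqrt (r b0)) < eps.
Proof.
  intros Hn Hl0 Hb0 eps Heps.
  assert (Hconv := link_sq_strictly_convex n g Hg Hn).
  destruct (midgap_small _ Hconv (sqrt (r b0)) eps Heps) as [eta [Heta Hsmall]].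
  destruct (pos_vec_lower_bound k lam0 Hl0) as [L [HL HLj]].
  set (W := g (sqnorm n Y)). assert (HW : 0 <= W) by (apply (link_ge0 n g Hg), sqnorm_nonneg).
  set (C := INR k * (3 * W / L) + 1).
  assert (HC : 0 < C).
  { assert (0 <= 3 * W / L) by (apply Rmult_le_pos; [lra| left; apply Rinv_0_lt_compat; lra]).
    generalize (pos_INR k). unfold C. nra. }
  exists (Rmin (L / 2) (eta / C)). split; [apply Rmin_glb_lt; [lra| apply Rdiv_lt_0_compat; lra]|].
  intros lam b Hl Hd Hb. apply Hsmall.
  set (d := edist k lam lam0) in *. assert (Hd0 : 0 <= d) by apply sqrt_pos.
  assert (Hd1 : d < L / 2) by (eapply Rlt_le_trans; [exact Hd| apply Rmin_l]).
  assert (Hd2 : d * C < eta).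
  { assert (h : d < eta / C) by (eapply Rlt_le_trans; [exact Hd| apply Rmin_r]).
    apply (Rmult_lt_compat_r C) in h; [|exact HC].
    unfold Rdiv in h. rewrite Rmult_assoc, Rinv_l, Rmult_1_r in h by lra. exact h. }
  assert (Hgap := minimizers_midgap lam lam0 b b0 Hl Hl0 Hb Hb0).
  assert (Hbound := penalty_gap_bound lam lam0 b b0 L HL HLj Hl Hl0 Hd1 Hb Hb0).
  fold W d in Hbound. unfold C in Hd2. nra.
Qed.

Lemma residual_continuous lam0 b0 : pos_vec k lam0 -> is_minimizer n p k g Y X M q lam0 b0 ->
  forall eps, 0 < eps -> exists delta, 0 < delta /\ forall lam b, pos_vec k lam ->
    edist k lam lam0 < delta -> is_minimizer n p k g Y X M q lam b ->
    Rabs (r b - r b0) < eps.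
Proof.
  intros Hl0 Hb0 eps Heps. destruct (Nat.eq_dec n 0) as [Hn|Hn].
  { exists 1. split; [lra|]. intros. unfold residual. rewrite Hn. cbn. rewrite Rminus_diag, Rabs_R0.
    exact Heps. }
  set (T := sqrt (sqnorm n Y)). assert (HT : 0 <= T) by apply sqrt_pos.
  destruct (sqrt_residual_continuous lam0 b0 ltac:(lia) Hl0 Hb0 (eps / (2 * T + 1)))
    as [delta [Hdelta Hclose]]; [apply Rdiv_lt_0_compat; lra|].
  exists delta. split; [exact Hdelta|]. intros lam b Hl Hd Hb.
  assert (Hc := Hclose lam b Hl Hd Hb).
  (* [|r - r0| = |sqrt r - sqrt r0| (sqrt r + sqrt r0)], and both roots are at most [T]. *)
  assert (Ht : sqrt (r b) <= T) by apply sqrt_le_1_alt, (minimizer_bounds lam b Hl Hb).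
  assert (Hc0 : sqrt (r b0) <= T) by apply sqrt_le_1_alt, (minimizer_bounds lam0 b0 Hl0 Hb0).
  rewrite <- (pow2_sqrt (r b)), <- (pow2_sqrt (r b0)) by apply residual_ge0.
  replace (sqrt (r b) ^ 2 - sqrt (r b0) ^ 2)
    with ((sqrt (r b) - sqrt (r b0)) * (sqrt (r b) + sqrt (r b0))) by ring.
  assert (P1 := sqrt_pos (r b)). assert (P2 := sqrt_pos (r b0)).
  rewrite Rabs_mult, (Rabs_right (sqrt (r b) + sqrt (r b0))) by lra.
  apply (Rmult_lt_compat_r (2 * T + 1)) in Hc; [|lra].
  unfold Rdiv in Hc. rewrite Rmult_assoc, Rinv_l, Rmult_1_r in Hc by lra.
  assert (0 <= Rabs (sqrt (r b) - sqrt (r b0))) by apply Rabs_pos. nra.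
Qed.

End Minimizers.

Theorem lemma3 (n p k : nat) (Y : nat -> R) (X : nat -> nat -> R) (g : R -> R)
  (M : nat -> nat -> nat -> R) (q : nat -> R)
  (Hg : link_function n g)
  (Hq : forall j, (j < k)%nat -> 1 <= q j)
  (Hker : forall b : nat -> R,
     (forall j i, (j < k)%nat -> (i < p)%nat -> matvec p (M j) b i = 0) ->
     forall i, (i < p)%nat -> b i = 0) :
  (* the minimizer set is nonempty *)
  (forall lam, pos_vec k lam -> exists b, is_minimizer n p k g Y X M q lam b)
  (* the residual norm (hence also its image under g) does not depend on the minimizer *)
  /\ (forall lam b1 b2, pos_vec k lam ->
        is_minimizer n p k g Y X M q lam b1 -> is_minimizer n p k g Y X M q lam b2 ->
        sqnorm n (fun i => Y i - matvec p X b1 i) = sqnorm n (fun i => Y i - matvec p X b2 i)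
        /\ g (sqnorm n (fun i => Y i - matvec p X b1 i))
           = g (sqnorm n (fun i => Y i - matvec p X b2 i)))
  (* continuity in lam on (0,oo)^k w.r.t. the Euclidean norm *)
  /\ (forall lam0 b0, pos_vec k lam0 -> is_minimizer n p k g Y X M q lam0 b0 ->
        forall eps, 0 < eps -> exists delta, 0 < delta /\
          forall lam b, pos_vec k lam -> edist k lam lam0 < delta ->
            is_minimizer n p k g Y X M q lam b ->
            Rabs (g (sqnorm n (fun i => Y i - matvec p X b i))
                  - g (sqnorm n (fun i => Y i - matvec p X b0 i))) < eps
            /\ Rabs (sqnorm n (fun i => Y i - matvec p X b i)
                     - sqnorm n (fun i => Y i - matvec p X b0 i)) < eps).
Proof.
  split; [exact (exists_minimizer n p k Y X g M q Hg Hq Hker)|].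
  split.
  - intros lam b1 b2 Hl H1 H2.
    assert (E := residual_unique n p k Y X g M q Hg Hq lam b1 b2 Hl H1 H2).
    unfold residual in E. rewrite E. split; reflexivity.
  - intros lam0 b0 Hl0 Hb0 eps Heps.
    destruct (link_continuous n g Hg _ (residual_ge0 n p Y X b0) eps Heps) as [a [Ha Hgc]].
    destruct (residual_continuous n p k Y X g M q Hg Hq lam0 b0 Hl0 Hb0 (Rmin eps a))
      as [delta [Hdelta Hclose]]; [apply Rmin_glb_lt; assumption|].
    exists delta. split; [exact Hdelta|]. intros lam b Hl Hd Hb.
    assert (Hr := Hclose lam b Hl Hd Hb).
    assert (Hr1 := Rlt_le_trans _ _ _ Hr (Rmin_l eps a)).
    assert (Hr2 := Rlt_le_trans _ _ _ Hr (Rmin_r eps a)).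
    split; [exact (Hgc _ (residual_ge0 n p Y X b) Hr2)| exact Hr1].
Qed.
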